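(* Let $\mathcal X,\hat{\mathcal X}$ be finite alphabets, $\{p_\theta\}_{\theta\in\Theta}$ a nonempty family of probability distributions on $\mathcal X$, and $d:\mathcal X\times\hat{\mathcal X}\to[0,\infty)$ a distortion measure. Then the rate distortion function $\hat R^I(D)$ satisfies: (1) $\hat R^I(D)$ is non-increasing in $D$; (2) $\hat R^I(D)$ is a convex function on $[0,+\infty)$.
   Context: For a transition probability matrix $\boldsymbol Q=(q(\hat x|x))$ from $\mathcal X$ to $\hat{\mathcal X}$: maximum expected distortion $\mathbb E_{\boldsymbol Q}[d(X,\hat X)]=\sup_{\theta\in\Theta}\sum_{x,\hat x}p_\theta(x)q(\hat x|x)d(x,\hat x)$; nonlinear mutual information $\overline I[\{p_\theta\}_{\theta\in\Theta};\boldsymbol Q]=\sup_{\theta\in\Theta}\sum_{x,\hat x}p_\theta(x)q(\hat x|x)\log\frac{q(\hat x|x)}{\sum_{x'}q(\hat x|x')p_\theta(x')}$. Rate distortion function: $\hat R^I(D)=\inf\{\overline I[\{p_\theta\};\boldsymbol Q]:\ \boldsymbol Q\text{ with }\mathbb E_{\boldsymbol Q}[d(X,\hat X)]\le D\}$ (infimum of the empty set is $+\infty$). *)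

From mathcomp Require Import all_boot all_order all_algebra.
From mathcomp Require Import all_classical all_reals all_analysis.
Set Implicit Arguments. Unset Strict Implicit. Unset Printing Implicit Defensive.
Import Order.TTheory GRing.Theory Num.Theory.
Local Open Scope classical_set_scope.
Local Open Scope ring_scope.

Section RD.
Variables (R : realType) (X Xh : finType) (Theta : Type).

Definition is_dist (T : finType) (p : T -> R) : Prop :=
  (forall x, 0 <= p x) /\ \sum_(x : T) p x = 1.

(* a transition probability matrix Q = (q(xh|x)), Q x xh = q(xh|x) *)
Definition is_channel (Q : X -> Xh -> R) : Prop := forall x, is_dist (Q x).

Definition max_exp_distortion (p : Theta -> X -> R) (d : X -> Xh -> R)
    (Q : X -> Xh -> R) : \bar R :=
  ereal_sup [set (\sum_(x : X) \sum_(xh : Xh) p th x * Q x xh * d x xh)%:E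
            | th in [set: Theta]].

Definition out_marg (p : X -> R) (Q : X -> Xh -> R) (xh : Xh) : R :=
  \sum_(x' : X) Q x' xh * p x'.

(* nonlinear mutual information (natural log; terms with p q = 0 vanish) *)
Definition nl_mutual_info (p : Theta -> X -> R) (Q : X -> Xh -> R) : \bar R :=
  ereal_sup [set (\sum_(x : X) \sum_(xh : Xh)
                    p th x * Q x xh * ln (Q x xh / out_marg (p th) Q xh))%:E
            | th in [set: Theta]].

(* rate distortion function; inf of the empty set is +oo *)
Definition rate_distortion (p : Theta -> X -> R) (d : X -> Xh -> R) (D : R)
    : \bar R :=
  ereal_inf [set nl_mutual_info p Q | Q in
     [set Q | is_channel Q /\ (max_exp_distortion p d Q <= D%:E)%E]].

End RD.

From mathcomp Require Import all_boot all_order all_algebra.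
From mathcomp Require Import all_classical all_reals all_analysis.
From mathcomp Require Import ring lra.
Import Order.TTheory GRing.Theory Num.Theory.
Local Open Scope ring_scope.

(* Enlarging D enlarges the set of admissible channels, so the infimum can only
   decrease.  For convexity, mix channels Q1, Q2 admissible for D1, D2 into
   l Q1 + (1 - l) Q2.  Expected distortion is affine in the channel, so the
   mixture is admissible for l D1 + (1 - l) D2; for each fixed source p_theta
   the mutual information is convex in the channel by the log-sum inequality,
   and convexity survives the supremum over theta.  Gibbs' inequality makes all
   rates nonnegative, which keeps -oo out of the infimum computation. *)

Set Implicit Arguments. Unset Strict Implicit. Unset Printing Implicit Defensive.

Section LogSum.
Variable R : realType.
Implicit Types a b c : R.

Lemma sub_le_mul_ln_div a b : 0 <= a -> 0 <= b -> (0 < a -> 0 < b) ->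
  a - b <= a * ln (a / b).
Proof.
move=> a_ge0 b_ge0 ab; have [->|a_neq0] := eqVneq a 0.
  by rewrite mul0r sub0r oppr_le0.
have a_gt0 : 0 < a by rewrite lt0r a_neq0.
have ba_gt0 : 0 < b / a by rewrite divr_gt0 // ab.
have ln_ba : ln (b / a) <= b / a - 1.
  by have := @le_ln1Dx R (b / a - 1); rewrite addrCA subrr addr0; apply; lra.
rewrite -invf_div lnV ?posrE // mulrN.
have : a * ln (b / a) <= a * (b / a - 1) by rewrite ler_wpM2l // ltW.
have -> : a * (b / a - 1) = b - a by field.
lra.
Qed.

Lemma mul_ln_div_ge a b c : 0 <= a -> 0 <= b -> 0 < c -> (0 < a -> 0 < b) ->
  a * ln c + (a - b * c) <= a * ln (a / b).
Proof.
move=> a_ge0 b_ge0 c_gt0 ab; have [->|a_neq0] := eqVneq a 0.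
  by rewrite !mul0r add0r sub0r oppr_le0 mulr_ge0 // ltW.
have a_gt0 : 0 < a by rewrite lt0r a_neq0.
have b_gt0 := ab a_gt0.
have -> : a / b = c * (a / (b * c)) by field; rewrite !gt_eqF.
rewrite lnM ?posrE ?divr_gt0 ?mulr_gt0 // mulrDr lerD2l.
by apply: sub_le_mul_ln_div; rewrite ?mulr_ge0 ?mulr_gt0 // ltW.
Qed.

Lemma log_sum2 (a1 a2 b1 b2 : R) :
  0 <= a1 -> 0 <= a2 -> 0 <= b1 -> 0 <= b2 ->
  (0 < a1 -> 0 < b1) -> (0 < a2 -> 0 < b2) ->
  (a1 + a2) * ln ((a1 + a2) / (b1 + b2))
  <= a1 * ln (a1 / b1) + a2 * ln (a2 / b2).
Proof.
move=> a1_ge0 a2_ge0 b1_ge0 b2_ge0 ab1 ab2.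
have [a0|a_neq0] := eqVneq (a1 + a2) 0.
  have [-> ->] : a1 = 0 /\ a2 = 0 by split; lra.
  by rewrite add0r !mul0r addr0.
have a_gt0 : 0 < a1 + a2 by rewrite lt0r a_neq0 addr_ge0.
have b_gt0 : 0 < b1 + b2.
  have [a1_gt0|a1_le0] := ltP 0 a1; first by have := ab1 a1_gt0; lra.
  by have := ab2 (_ : 0 < a2); lra.
set c := (a1 + a2) / (b1 + b2).
have c_gt0 : 0 < c by rewrite divr_gt0.
have := lerD (mul_ln_div_ge a1_ge0 b1_ge0 c_gt0 ab1)
             (mul_ln_div_ge a2_ge0 b2_ge0 c_gt0 ab2).
have bc : (b1 + b2) * c = a1 + a2 by rewrite /c mulrC divfK // gt_eqF.
lra.
Qed.

(* [log_sum2] applied to the rescaled pairs [(l q1, l m1)] and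
   [((1 - l) q2, (1 - l) m2)]. *)
Lemma mul_ln_div_convex (l q1 q2 m1 m2 : R) : 0 <= l <= 1 ->
  0 <= q1 -> 0 <= q2 -> 0 <= m1 -> 0 <= m2 ->
  (0 < q1 -> 0 < m1) -> (0 < q2 -> 0 < m2) ->
  (l * q1 + (1 - l) * q2)
    * ln ((l * q1 + (1 - l) * q2) / (l * m1 + (1 - l) * m2))
  <= l * (q1 * ln (q1 / m1)) + (1 - l) * (q2 * ln (q2 / m2)).
Proof.
move=> /andP[l_ge0 l_le1] q1_ge0 q2_ge0 m1_ge0 m2_ge0 qm1 qm2.
have l'_ge0 : 0 <= 1 - l by lra.
have scale (k a b : R) : k * a * ln (k * a / (k * b)) = k * (a * ln (a / b)).
  have [->|k_neq0] := eqVneq k 0; first by rewrite !mul0r.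
  by rewrite -mulf_div divff // mul1r mulrA.
have scale_pos (k a b : R) :
    0 <= k -> (0 < a -> 0 < b) -> 0 < k * a -> 0 < k * b.
  move=> k_ge0 ab; have [->|k_neq0] := eqVneq k 0; first by rewrite mul0r ltxx.
  have k_gt0 : 0 < k by rewrite lt0r k_neq0.
  by rewrite !pmulr_rgt0.
rewrite -scale -[X in _ <= _ + X]scale.
by apply: log_sum2; rewrite ?mulr_ge0 //; apply: scale_pos.
Qed.

End LogSum.

Lemma le_ereal_infD (R : realType) (S1 S2 : set (\bar R)) (z : \bar R) :
  lbound S1 0%E -> lbound S2 0%E ->
  (forall x y, S1 x -> S2 y -> (z <= x + y)%E) ->
  (z <= ereal_inf S1 + ereal_inf S2)%E.
Proof.
move=> S1_ge0 S2_ge0 zS.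
have inf1_ge0 : (0 <= ereal_inf S1)%E := le_ereal_inf_tmp S1_ge0.
have inf2_ge0 : (0 <= ereal_inf S2)%E := le_ereal_inf_tmp S2_ge0.
have neqNy (x : \bar R) : (0 <= x)%E -> x != -oo%E.
  by move=> x_ge0; rewrite gt_eqF // (lt_le_trans ltNy0).
case E1 : (ereal_inf S1) => [r1| |];
  [|by rewrite addye ?leey ?neqNy|by move: inf1_ge0; rewrite E1].
case E2 : (ereal_inf S2) => [r2| |];
  [|by rewrite addey ?leey|by move: inf2_ge0; rewrite E2].
apply/lee_addgt0Pr => e e_gt0.
have e2_gt0 : 0 < e / 2 by rewrite divr_gt0.
have [x S1x /ltW x_le] : exists2 x, S1 x & (x < (r1 + e / 2)%:E)%E.
  by rewrite EFinD -E1; apply: lb_ereal_inf_adherent; rewrite ?E1.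
have [y S2y /ltW y_le] : exists2 y, S2 y & (y < (r2 + e / 2)%:E)%E.
  by rewrite EFinD -E2; apply: lb_ereal_inf_adherent; rewrite ?E2.
apply: le_trans (zS x y S1x S2y) _; apply: le_trans (leeD x_le y_le) _.
by rewrite -!EFinD lee_fin; lra.
Qed.

Section Channels.
Variables (R : realType) (X Xh : finType).
Implicit Types (p : X -> R) (d Q : X -> Xh -> R).

Definition mutual_info p Q : R :=
  \sum_(x : X) \sum_(xh : Xh) p x * Q x xh * ln (Q x xh / out_marg p Q xh).

Definition exp_distortion p d Q : R :=
  \sum_(x : X) \sum_(xh : Xh) p x * Q x xh * d x xh.

Definition mix_channel (l : R) Q1 Q2 : X -> Xh -> R :=
  fun x xh => l * Q1 x xh + (1 - l) * Q2 x xh.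

Lemma is_channel_mix (l : R) Q1 Q2 : 0 <= l <= 1 ->
  is_channel Q1 -> is_channel Q2 -> is_channel (mix_channel l Q1 Q2).
Proof.
move=> /andP[l_ge0 l_le1] Q1_ch Q2_ch x; split.
  move=> xh; have := (Q1_ch x).1 xh; have := (Q2_ch x).1 xh.
  by rewrite /mix_channel; nra.
by rewrite /mix_channel big_split /= -!mulr_sumr (Q1_ch x).2 (Q2_ch x).2; ring.
Qed.

Lemma exp_distortion_mix p d (l : R) Q1 Q2 :
  exp_distortion p d (mix_channel l Q1 Q2)
  = l * exp_distortion p d Q1 + (1 - l) * exp_distortion p d Q2.
Proof.
rewrite /exp_distortion !mulr_sumr -big_split /=; apply: eq_bigr => x _.
rewrite !mulr_sumr -big_split /=; apply: eq_bigr => xh _.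
by rewrite /mix_channel; ring.
Qed.

Lemma out_marg_mix p (l : R) Q1 Q2 xh :
  out_marg p (mix_channel l Q1 Q2) xh
  = l * out_marg p Q1 xh + (1 - l) * out_marg p Q2 xh.
Proof.
rewrite /out_marg !mulr_sumr -big_split /=; apply: eq_bigr => x _.
by rewrite /mix_channel; ring.
Qed.

Lemma is_dist_out_marg p Q :
  is_dist p -> is_channel Q -> is_dist (out_marg p Q).
Proof.
move=> [p_ge0 sum_p] Q_ch; split.
  by move=> xh; apply: sumr_ge0 => x _; rewrite mulr_ge0 // (Q_ch x).1.
rewrite /out_marg exchange_big /= -[RHS]sum_p; apply: eq_bigr => x _.
by rewrite -mulr_suml (Q_ch x).2 mul1r.
Qed.

Lemma out_marg_gt0 p Q x xh : (forall x, 0 <= p x) -> is_channel Q ->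
  0 < p x -> 0 < Q x xh -> 0 < out_marg p Q xh.
Proof.
move=> p_ge0 Q_ch px_gt0 Q_gt0; rewrite /out_marg (bigD1 x) //=.
apply: lt_le_trans (_ : 0 < Q x xh * p x) _; first exact: mulr_gt0.
by rewrite lerDl sumr_ge0 // => y _; rewrite mulr_ge0 // (Q_ch y).1.
Qed.

(* Gibbs' inequality: [mutual_info p Q] is the relative entropy of the joint
   law [p x * Q x xh] with respect to [p x * out_marg p Q xh]. *)
Lemma mutual_info_ge0 p Q : is_dist p -> is_channel Q -> 0 <= mutual_info p Q.
Proof.
move=> p_dist Q_ch; have [p_ge0 _] := p_dist.
have [m_ge0 sum_m] := is_dist_out_marg p_dist Q_ch.
have term x xh : p x * Q x xh - p x * out_marg p Q xh
                 <= p x * Q x xh * ln (Q x xh / out_marg p Q xh).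
  have [->|px_neq0] := eqVneq (p x) 0; first by rewrite !mul0r subrr.
  have px_gt0 : 0 < p x by rewrite lt0r px_neq0 p_ge0.
  rewrite -mulrBr -mulrA ler_wpM2l //.
  by apply: sub_le_mul_ln_div => //; [exact: (Q_ch x).1 | exact: out_marg_gt0].
apply: le_trans (ler_sum _ (fun x _ => ler_sum _ (fun xh _ => term x xh))).
rewrite big1 // => x _.
by rewrite sumrB -!mulr_sumr (Q_ch x).2 sum_m subrr.
Qed.

Lemma mutual_info_convex p (l : R) Q1 Q2 : is_dist p -> 0 <= l <= 1 ->
  is_channel Q1 -> is_channel Q2 ->
  mutual_info p (mix_channel l Q1 Q2)
  <= l * mutual_info p Q1 + (1 - l) * mutual_info p Q2.
Proof.
move=> p_dist l01 Q1_ch Q2_ch; have [p_ge0 _] := p_dist.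
rewrite /mutual_info !mulr_sumr -big_split /=; apply: ler_sum => x _.
rewrite !mulr_sumr -big_split /=; apply: ler_sum => xh _.
rewrite out_marg_mix /mix_channel.
have [->|px_neq0] := eqVneq (p x) 0; first by rewrite !mul0r !mulr0 addr0.
have px_gt0 : 0 < p x by rewrite lt0r px_neq0 p_ge0.
rewrite -!mulrA [in X in _ <= X]mulrCA [in X in _ <= _ + X]mulrCA -mulrDr.
rewrite ler_wpM2l //.
apply: mul_ln_div_convex;
  rewrite ?(Q1_ch x).1 ?(Q2_ch x).1 ?(is_dist_out_marg p_dist Q1_ch).1
          ?(is_dist_out_marg p_dist Q2_ch).1 //; exact: out_marg_gt0.
Qed.

End Channels.

Section RateDistortion.
Variables (R : realType) (X Xh : finType) (Theta : Type).
Variables (p : Theta -> X -> R) (d : X -> Xh -> R).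
Hypothesis p_dist : forall th, is_dist (p th).
Implicit Types (Q : X -> Xh -> R) (D l : R).

Lemma mutual_info_le_nl th Q :
  ((mutual_info (p th) Q)%:E <= nl_mutual_info p Q)%E.
Proof. by apply: ereal_sup_ubound; exists th. Qed.

Lemma exp_distortion_le_max th Q :
  ((exp_distortion (p th) d Q)%:E <= max_exp_distortion p d Q)%E.
Proof. by apply: ereal_sup_ubound; exists th. Qed.

Lemma nl_mutual_info_ge0 Q : inhabited Theta -> is_channel Q ->
  (0 <= nl_mutual_info p Q)%E.
Proof.
move=> [th] Q_ch; apply: le_trans (mutual_info_le_nl th Q).
by rewrite lee_fin mutual_info_ge0.
Qed.

Lemma nl_mutual_info_mix l Q1 Q2 : 0 <= l <= 1 ->
  is_channel Q1 -> is_channel Q2 ->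
  (nl_mutual_info p (mix_channel l Q1 Q2)
   <= l%:E * nl_mutual_info p Q1 + (1 - l)%:E * nl_mutual_info p Q2)%E.
Proof.
move=> l01 Q1_ch Q2_ch; have /andP[l_ge0 l_le1] := l01.
apply/ereal_supP => _ [th _ <-].
apply: le_trans (_ : ((l * mutual_info (p th) Q1
                       + (1 - l) * mutual_info (p th) Q2)%:E <= _)%E).
  by rewrite lee_fin mutual_info_convex.
rewrite EFinD !EFinM leeD // lee_wpmul2l ?lee_fin ?subr_ge0 //;
  exact: mutual_info_le_nl.
Qed.

Lemma max_exp_distortion_mix l D1 D2 Q1 Q2 : 0 <= l <= 1 ->
  (max_exp_distortion p d Q1 <= D1%:E)%E ->
  (max_exp_distortion p d Q2 <= D2%:E)%E ->
  (max_exp_distortion p d (mix_channel l Q1 Q2)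
   <= (l * D1 + (1 - l) * D2)%:E)%E.
Proof.
move=> /andP[l_ge0 l_le1] Q1_D1 Q2_D2; apply/ereal_supP => _ [th _ <-].
rewrite lee_fin -/(exp_distortion (p th) d _) exp_distortion_mix.
have le_D Q D : (max_exp_distortion p d Q <= D%:E)%E ->
    exp_distortion (p th) d Q <= D.
  by move=> QD; rewrite -lee_fin (le_trans (exp_distortion_le_max th Q)).
by rewrite lerD // ler_wpM2l ?subr_ge0 // le_D.
Qed.

Lemma rate_distortion_le D1 D2 : D1 <= D2 ->
  (rate_distortion p d D2 <= rate_distortion p d D1)%E.
Proof.
move=> D12; apply/ereal_inf_le_tmp/image_subset => Q [Q_ch QD1]; split=> //.
by rewrite (le_trans QD1) ?lee_fin.
Qed.

Lemma rate_distortion_convex D1 D2 l : inhabited Theta -> 0 <= l <= 1 ->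
  (rate_distortion p d (l * D1 + (1 - l) * D2)
   <= l%:E * rate_distortion p d D1 + (1 - l)%:E * rate_distortion p d D2)%E.
Proof.
move=> Theta0 l01; have /andP[l_ge0 l_le1] := l01.
have [->|l_neq0] := eqVneq l 0.
  by rewrite mul0r add0r subr0 mul1r mul0e add0e mul1e.
have [->|l_neq1] := eqVneq l 1.
  by rewrite mul1r subrr mul0r addr0 mul0e adde0 mul1e.
have l_gt0 : 0 < l by rewrite lt0r l_neq0.
have l'_gt0 : 0 < 1 - l by rewrite subr_gt0 lt_neqAle l_neq1.
rewrite -!ereal_inf_pZl //; apply: le_ereal_infD.
1,2: move=> _ [_ [Q [Q_ch _] <-] <-].
1,2: by apply: mule_ge0; [rewrite lee_fin ltW | exact: nl_mutual_info_ge0].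
move=> _ _ [_ [Q1 [Q1_ch Q1_D1] <-] <-] [_ [Q2 [Q2_ch Q2_D2] <-] <-].
apply: le_trans (nl_mutual_info_mix l01 Q1_ch Q2_ch).
apply: ereal_inf_lbound; exists (mix_channel l Q1 Q2) => //; split.
  exact: is_channel_mix.
exact: max_exp_distortion_mix.
Qed.

End RateDistortion.

Theorem theorem13 (R : realType) (X Xh : finType) (Theta : Type)
    (p : Theta -> X -> R) (d : X -> Xh -> R) :
  inhabited Theta ->
  (forall th, is_dist (p th)) ->
  (forall x xh, 0 <= d x xh) ->
  (forall D1 D2 : R, D1 <= D2 ->
     (rate_distortion p d D2 <= rate_distortion p d D1)%E) /\
  (forall D1 D2 lam : R, 0 <= D1 -> 0 <= D2 -> 0 <= lam <= 1 ->
     (rate_distortion p d (lam * D1 + (1 - lam) * D2)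
        <= lam%:E * rate_distortion p d D1
           + (1 - lam)%:E * rate_distortion p d D2)%E).
Proof.
move=> Theta0 p_dist _; split; first exact: rate_distortion_le.
by move=> D1 D2 lam _ _; exact: rate_distortion_convex.
Qed.
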